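(* Let $\mathit{VI}$ be a finite set of variables with $\#\mathit{VI}=n$ and let $1\le k\le n$. For each $sh_1,sh_2\in\mathit{SH}$, if $\rho_{\mathit{TSD}_k}(sh_1)\ne\rho_{\mathit{TSD}_k}(sh_2)$ then there exist $\sigma\in\mathit{Subst}$ and $j\in\{1,\dots,k\}$ such that $\rho_{\mathit{TS}_j}(\mathrm{amgu}(sh_1,\sigma))\ne\rho_{\mathit{TS}_j}(\mathrm{amgu}(sh_2,\sigma))$.
   Context: $\mathit{SG}=\wp(\mathit{VI})\setminus\{\emptyset\}$ and $\mathit{SH}=\wp(\mathit{SG})$. $\rho_{\mathit{TSD}_k}(sh)=\{\,S\in\mathit{SG}\mid \forall T\subseteq S:\ \#T<k\implies S=\bigcup\{U\in sh\mid T\subseteq U\subseteq S\}\,\}$. For $S\in\mathit{SG}$, $\mathrm{tuples}_j(S)=\{T\subseteq S\mid\#T=j\}$, $\mathrm{tuples}_j(sh)=\bigcup_{S'\in sh}\mathrm{tuples}_j(S')$, and $\rho_{\mathit{TS}_j}(sh)=\{S\in\mathit{SG}\mid\mathrm{tuples}_j(S)\subseteq\mathrm{tuples}_j(sh)\}$. Terms are first-order terms (ground terms exist); $\mathrm{vars}(t)$ is the set of variables of $t$. $\mathit{Subst}$ is the set of idempotent substitutions (finite sets of bindings $x\mapsto t$, $t\ne x$), with variables in $\mathit{VI}$. $\mathrm{bin}(sh_1,sh_2)=\{S_1\cup S_2\mid S_i\in sh_i\}$; $sh^\star=\{S\in\mathit{SG}\mid\exists sh'\subseteq sh: S=\bigcup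 sh'\}$; $\mathrm{rel}(V,sh)=\{S\in sh\mid S\cap V\ne\emptyset\}$; with $v_x=\{x\}$, $v_t=\mathrm{vars}(t)$, $v_{xt}=v_x\cup v_t$: $\mathrm{amgu}(sh,x\mapsto t)=(sh\setminus\mathrm{rel}(v_{xt},sh))\cup\mathrm{bin}(\mathrm{rel}(v_x,sh)^\star,\mathrm{rel}(v_t,sh)^\star)$; $\mathrm{amgu}(sh,\emptyset)=sh$ and $\mathrm{amgu}(sh,\{x\mapsto t\}\cup\sigma)=\mathrm{amgu}(\mathrm{amgu}(sh,x\mapsto t),\sigma\setminus\{x\mapsto t\})$. *)

From Stdlib Require Import List.
From mathcomp Require Import all_boot.
Set Implicit Arguments. Unset Strict Implicit. Unset Printing Implicit Defensive.

Section Sharing.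
Variable V : finType.

(* first-order terms: variables, and function symbols (named by nat) of any arity;
   ground terms exist, e.g. Fn 0 [::] *)
Inductive term : Type :=
| Var of V
| Fn of nat & seq term.

Fixpoint vars (t : term) : {set V} :=
  match t with
  | Var x => [set x]
  | Fn _ ts =>
      (fix vs (l : seq term) : {set V} :=
         match l with [::] => set0 | u :: l' => vars u :|: vs l' end) ts
  end.

Definition tuples (j : nat) (S : {set V}) : {set {set V}} :=
  [set T : {set V} | (T \subset S) && (#|T| == j)].
Definition tuples_sh (j : nat) (sh : {set {set V}}) : {set {set V}} :=
  \bigcup_(S' in sh) tuples j S'.

Definition rhoTS (j : nat) (sh : {set {set V}}) : {set {set V}} :=
  [set S : {set V} | (S != set0) && (tuples j S \subset tuples_sh j sh)].

Definition rhoTSD (k : nat) (sh : {set {set V}}) : {set {set V}} :=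
  [set S : {set V} | (S != set0) &&
     [forall T : {set V}, ((T \subset S) && (#|T| < k)) ==>
        (S == \bigcup_(U in sh | (T \subset U) && (U \subset S)) U)]].

Definition isSH (sh : {set {set V}}) : bool := set0 \notin sh.

Definition rel (W : {set V}) (sh : {set {set V}}) : {set {set V}} :=
  [set S in sh | ~~ [disjoint S & W]].

Definition bin (sh1 sh2 : {set {set V}}) : {set {set V}} :=
  [set S1 :|: S2 | S1 in sh1, S2 in sh2].

Definition star (sh : {set {set V}}) : {set {set V}} :=
  [set S : {set V} | (S != set0) &&
     [exists sh' : {set {set V}}, (sh' \subset sh) && (S == \bigcup_(U in sh') U)]].

Definition amgu1 (sh : {set {set V}}) (x : V) (t : term) : {set {set V}} :=
  (sh :\: rel (x |: vars t) sh) :|: bin (star (rel [set x] sh)) (star (rel (vars t) sh)).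

(* A substitution is represented by the list of its bindings (x, t). *)
Definition amgu (sh : {set {set V}}) (sigma : seq (V * term)) : {set {set V}} :=
  foldl (fun s b => amgu1 s b.1 b.2) sh sigma.

(* sigma is an idempotent substitution: each variable bound at most once,
   no trivial binding x |-> x, and no bound variable occurs in any bound term *)
Definition is_subst (sigma : seq (V * term)) : Prop :=
  uniq (map fst sigma) /\
  (forall b, List.In b sigma -> b.2 <> Var b.1) /\
  (forall b c, List.In b sigma -> List.In c sigma -> b.1 \notin vars c.2).

End Sharing.

(* Grounding every variable outside a sharing group S turns [amgu sh sigma]
   into the groups of [sh] contained in S.  If S is in [rhoTSD k sh1] but not
   in [rhoTSD k sh2], some T with #T < k witnesses this, together with a
   variable v of S covered by the groups of [sh1] between T and S but by none
   of [sh2]; then [v |: T] is a j-tuple, j <= k, lying inside a group of the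
   grounded [sh1] but inside no group of the grounded [sh2], so [rhoTS j]
   separates them. *)
From Pilot Require Import Defs.
From mathcomp Require Import all_boot.

Set Implicit Arguments.
Unset Strict Implicit.
Unset Printing Implicit Defensive.

Section Grounding.
Variable V : finType.
Implicit Types (S U : {set V}) (sh : {set {set V}}).

Definition ground : term V := Fn 0 [::].

Definition ground_outside S : seq (V * term V) :=
  [seq (x, ground) | x <- enum (~: S)].

Lemma is_subst_ground_outside S : is_subst (ground_outside S).
Proof.
split; first by rewrite -map_comp map_id enum_uniq.
split=> [b | b c _] /List.in_map_iff [x [<- _]] //=.
by rewrite inE.
Qed.

Lemma rel_set0 sh : Defs.rel set0 sh = set0.
Proof. by apply/setP => U; rewrite !inE disjoints_subset setC0 subsetT andbF. Qed.

Lemma star_set0 : star (set0 : {set {set V}}) = set0.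
Proof.
apply/setP => U; rewrite !inE; apply/negbTE/andP => -[U_neq0 /existsP [sh']].
by rewrite subset0 => /andP [/eqP -> /eqP U0]; rewrite U0 big_set0 eqxx in U_neq0.
Qed.

Lemma amgu1_ground sh x : amgu1 sh x ground = [set U in sh | x \notin U].
Proof.
rewrite /amgu1 /= setU0 rel_set0 star_set0.
have -> : bin (star (Defs.rel [set x] sh)) set0 = set0.
  by apply/setP => U; rewrite inE; apply/negbTE/imset2P => -[S1 S2 _]; rewrite inE.
apply/setP => U; rewrite setU0 !inE disjoint_sym disjoints1 negbK.
by case: (U \in sh); rewrite /= ?andbT.
Qed.

Lemma amgu_ground_seq sh (s : seq V) :
  amgu sh [seq (x, ground) | x <- s] = [set U in sh | all (fun x => x \notin U) s].
Proof.
elim: s sh => [|x s IHs] sh /=; first by apply/setP => U; rewrite inE andbT.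
rewrite /amgu /= -/(amgu _ _) IHs amgu1_ground.
by apply/setP => U; rewrite !inE andbA.
Qed.

Lemma amgu_ground_outside sh S : amgu sh (ground_outside S) = sh ::&: S.
Proof.
rewrite amgu_ground_seq; apply/setP => U; rewrite !inE; congr (_ && _).
apply/allP/subsetP => [notin_U y | subUS y].
  by apply: contraLR => yS; apply: notin_U; rewrite mem_enum inE.
by rewrite mem_enum inE; apply: contra => /subUS.
Qed.

End Grounding.

Section Tuples.
Variable V : finType.
Implicit Types (S U W : {set V}) (sh : {set {set V}}).

Lemma mem_rhoTS_card sh W :
  W != set0 -> (W \in rhoTS #|W| sh) = [exists U in sh, W \subset U].
Proof.
move=> W_neq0; rewrite inE W_neq0 /=.
apply/subsetP/exists_inP => [tuplesW | [U U_sh WU] T].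
  have /tuplesW /bigcupP [U U_sh] : W \in tuples #|W| W by rewrite inE subxx eqxx.
  by rewrite inE => /andP [WU _]; exists U.
rewrite inE => /andP [TW /eqP cardT].
have -> : T = W by apply/eqP; rewrite eqEcard TW cardT leqnn.
by apply/bigcupP; exists U; rewrite // inE WU eqxx.
Qed.

Lemma rhoTSD_separating_tuple k sh1 sh2 S :
  S \in rhoTSD k sh1 -> S \notin rhoTSD k sh2 ->
  exists2 W : {set V}, 0 < #|W| <= k &
    [exists U in sh1 ::&: S, W \subset U] && ~~ [exists U in sh2 ::&: S, W \subset U].
Proof.
rewrite !inE => /andP [S_neq0 /forallP S_sh1].
rewrite S_neq0 /= => /forallPn [T]; rewrite negb_imply => /andP [/andP [TS ltTk]].
have := S_sh1 T; rewrite TS ltTk => /eqP S_cover1.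
move=> S_neq_C2; set C2 := \bigcup_(U in sh2 | _) U in S_neq_C2.
have C2S : C2 \subset S by apply/bigcupsP => U /and3P [].
have [v vS v_notC2] : exists2 v, v \in S & v \notin C2.
  by apply/subsetPn; apply: contra S_neq_C2 => SC2; rewrite eqEsubset SC2.
move: vS; rewrite {1}S_cover1 => /bigcupP [U1 /and3P [U1_sh1 TU1 U1S] vU1].
have W_gt0 : 0 < #|v |: T| by rewrite card_gt0; apply/set0Pn; exists v; rewrite setU11.
exists (v |: T).
  by rewrite W_gt0 cardsU1 (leq_trans _ ltTk) // -add1n leq_add2r leq_b1.
apply/andP; split.
  by apply/exists_inP; exists U1; rewrite ?inE ?U1_sh1 ?U1S // subUset sub1set vU1 TU1.
apply/exists_inP => -[U]; rewrite !inE => /andP [U_sh2 US].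
rewrite subUset sub1set => /andP [vU TU]; move/negP: v_notC2; apply.
by apply/bigcupP; exists U; rewrite ?U_sh2 ?TU.
Qed.

End Tuples.

Theorem theorem3p17 (V : finType) (n k : nat) (sh1 sh2 : {set {set V}}) :
  #|V| = n -> 1 <= k <= n ->
  isSH sh1 -> isSH sh2 ->
  rhoTSD k sh1 != rhoTSD k sh2 ->
  exists sigma : seq (V * term V), is_subst sigma /\
    exists j : nat, 1 <= j <= k /\
      rhoTS j (amgu sh1 sigma) != rhoTS j (amgu sh2 sigma).
Proof.
move=> _ _ _ _ rho_neq.
have {rho_neq} [S] : exists S, (S \in rhoTSD k sh1) != (S \in rhoTSD k sh2).
  by apply/existsP; apply: contraR rho_neq => /existsPn same; apply/eqP/setP => S; apply/eqP/negPn.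
wlog [S_sh1 S_sh2] : sh1 sh2 / S \in rhoTSD k sh1 /\ S \notin rhoTSD k sh2.
  move=> sep; case S1: (S \in rhoTSD k sh1); case S2: (S \in rhoTSD k sh2) => // _.
    by apply: sep; rewrite ?S1 ?S2.
  have := sep sh2 sh1; rewrite S1 S2 => /(_ (conj isT isT) isT) [sigma [sigmaP [j [jk neq]]]].
  by exists sigma; split => //; exists j; rewrite eq_sym.
move=> _.
have [W /andP [W_gt0 Wk] W_sep] := rhoTSD_separating_tuple S_sh1 S_sh2.
have W_neq0 : W != set0 by rewrite -card_gt0.
exists (ground_outside S); split; first exact: is_subst_ground_outside.
exists #|W|; split; first by rewrite W_gt0 Wk.
rewrite !amgu_ground_outside; apply: contraTneq W_sep => rho_eq.
by rewrite -!mem_rhoTS_card // rho_eq andbN.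
Qed.
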